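(* Let $S>0$, $\zeta\in\{0,1\}$, $\phi\in\mathbb{R}$ and let $(u_n)_{n\in\mathbb{N}}$ be the $\phi$-market impact scenario defined below. (a) If $\phi\ge 1$, then $(u_n)$ is not admissible from a trading perspective. (b) If $\phi\in(-1,1)$, then $(u_n)$ is admissible from a trading perspective. (c) If $\phi\le -1$ and for every $x\in\mathbb{R}$ the sequence $(s_n(x))_{n\in\mathbb{N}}$ is bounded, then $(u_n)$ is admissible from a trading perspective. In particular, under the standing assumption that $(s_n(x))_{n}$ is bounded for every $x$ whenever $\phi\le -1$, the scenario is admissible if and only if $\phi\in(-\infty,1)$.
   Context: Fix $S>0$, $\zeta\in\{0,1\}$ and $\phi\in\mathbb{R}$. For $a,b\in\mathbb{R}$ write $a\vee b=\max(a,b)$. The $\phi$-market impact scenario starting from $x\in\mathbb{R}$ is the sequence of real-valued functions $(u_n)_{n\in\mathbb{N}}$ defined by $u_0(x)=x\vee(-S)$ and, for all $n\in\mathbb{N}$, $u_{n+1}(x)=\Big(\phi\big(1+\tfrac{s_n(x)}{S}\big)^{1+\zeta}u_n(x)\Big)\vee\big(-s_n(x)-S\big)$, where $s_n(x)=\sum_{k=0}^n u_k(x)$. The scenario is called admissible from a trading perspective if there exists $R>0$ such that for every $x\in(-R,R)$ the series $\sum_{n\ge0}u_n(x)$ converges. *)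

From Stdlib Require Import Reals.
Open Scope R_scope.

(* mis_pair S zeta phi x n = (u_n(x), s_n(x)) with s_n = sum_{k<=n} u_k *)
Fixpoint mis_pair (S : R) (zeta : nat) (phi : R) (x : R) (n : nat) : R * R :=
  match n with
  | O => let u0 := Rmax x (- S) in (u0, u0)
  | Datatypes.S m =>
      let (um, sm) := mis_pair S zeta phi x m in
      let un := Rmax (phi * (1 + sm / S) ^ (1 + zeta) * um) (- sm - S) in
      (un, sm + un)
  end.

Definition mis_u (S : R) (zeta : nat) (phi : R) (n : nat) (x : R) : R :=
  fst (mis_pair S zeta phi x n).

Definition mis_s (S : R) (zeta : nat) (phi : R) (n : nat) (x : R) : R :=
  sum_f_R0 (fun k => mis_u S zeta phi k x) n.

Definition admissible (u : nat -> R -> R) : Prop :=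
  exists R0 : R, R0 > 0 /\
    forall x : R, - R0 < x < R0 -> exists l : R, infinite_sum (fun n => u n x) l.

Definition partial_sums_bounded (S : R) (zeta : nat) (phi : R) : Prop :=
  forall x : R, exists M : R, forall n : nat, Rabs (mis_s S zeta phi n x) <= M.

(* Write y_n = 1 + s_n / S, so that u_(n+1) = max (phi y_n^(1+zeta) u_n, - S y_n):
   the truncation only acts by sending s to -S, after which the scenario stops.
   (a) For phi >= 1 and x > 0 every u_n stays above x, so the series diverges.
   (b) For |phi| < 1 and |x| small the partial sums stay near 0, where the impact
   factor y_n^(1+zeta) is near 1; so |u_(n+1)| <= q |u_n| for some q < 1.
   (c) For phi <= -1, away from the stopped state,
   y_(n+2) - y_(n+1) = phi y_(n+1)^k (y_(n+1) - y_n) with k = 1 + zeta, and by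
   convexity the energy y_(n+1) - phi y_n^(k+1) / (k+1) loses at least
   |y_(n+1) - y_n|^(k+1) / (k+1) per step, which forces convergence.  This holds
   for every x. *)

From Stdlib Require Import Reals Lra Lia Psatz Classical.
Open Scope R_scope.

Lemma not_infinite_sum_of_terms_ge (a : nat -> R) (c l : R) :
  0 < c -> (forall n, c <= a n) -> ~ infinite_sum a l.
Proof.
  intros Hc Ha Hsum.
  destruct (Hsum (c / 2)) as [N HN]; [lra|].
  assert (HN0 := HN N (le_n N)).
  assert (HN1 := HN (S N) (Nat.le_succ_diag_r N)).
  unfold Rdist in HN0, HN1; simpl in HN1.
  apply Rabs_def2 in HN0; apply Rabs_def2 in HN1.
  specialize (Ha (S N)); lra.
Qed.

Lemma Un_cv_shift1 (u : nat -> R) (l : R) : Un_cv u l -> Un_cv (fun n => u (S n)) l.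
Proof.
  intros Hu eps Heps; destruct (Hu eps Heps) as [N HN].
  exists N; intros n Hn; apply HN; lia.
Qed.

Lemma sum_pow_le_inv (q : R) (n : nat) :
  0 <= q < 1 -> sum_f_R0 (fun k => q ^ k) n <= / (1 - q).
Proof.
  intros Hq; rewrite tech3 by lra.
  assert (0 <= q ^ S n) by (apply pow_le; lra).
  unfold Rdiv; rewrite <- (Rmult_1_l (/ (1 - q))) at 2.
  apply Rmult_le_compat_r; [left; apply Rinv_0_lt_compat|]; lra.
Qed.

Lemma Un_cv_const (c : R) : Un_cv (fun _ => c) c.
Proof. intros eps Heps; exists 0%nat; intros; rewrite Rdist_eq; lra. Qed.

Lemma geometric_series_cv (C q : R) :
  0 <= q < 1 -> Un_cv (fun N => sum_f_R0 (fun n => C * q ^ n) N) (C * / (1 - q)).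
Proof.
  intros Hq.
  apply Un_cv_ext with (fun N => C * sum_f_R0 (fun n => 1 * q ^ n) N).
  - intro N; rewrite scal_sum; apply sum_eq; intros; ring.
  - apply CV_mult.
    + apply Un_cv_const.
    + apply GP_infinite; rewrite Rabs_pos_eq; lra.
Qed.

Lemma infinite_sum_of_geometric_bound (a : nat -> R) (C q : R) :
  0 <= q < 1 -> (forall n, Rabs (a n) <= C * q ^ n) -> exists l, infinite_sum a l.
Proof.
  intros Hq Ha.
  assert (Habs : { l | Un_cv (fun N => sum_f_R0 (fun n => Rabs (a n)) N) l }).
  { apply Rseries_CV_comp with (fun n => C * q ^ n).
    - intro n; split; [apply Rabs_pos | apply Ha].
    - exists (C * / (1 - q)); apply geometric_series_cv, Hq. }
  destruct (cv_cauchy_2 a (cauchy_abs a (cv_cauchy_1 _ Habs))) as [l Hl].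
  exists l; exact Hl.
Qed.

Lemma Un_cv_0_of_pow_le (t b : nat -> R) (m : nat) (c : R) :
  0 < c -> (forall n, Rabs (t n) ^ S m <= c * b n) -> Un_cv b 0 -> Un_cv t 0.
Proof.
  intros Hc Htb Hb eps Heps.
  assert (Hepsm : 0 < eps ^ S m) by (apply pow_lt; lra).
  destruct (Hb (eps ^ S m / c)) as [N HN]; [apply Rdiv_lt_0_compat; lra|].
  exists N; intros n Hn; specialize (HN n Hn); specialize (Htb n).
  unfold Rdist in *; rewrite Rminus_0_r in *.
  apply Rabs_def2 in HN; destruct HN as [HN _].
  apply (Rmult_lt_compat_l c) in HN; [|lra].
  replace (c * (eps ^ S m / c)) with (eps ^ S m) in HN by (field; lra).
  destruct (Rlt_le_dec (Rabs (t n)) eps) as [Hlt|Hge]; [exact Hlt|].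
  assert (eps ^ S m <= Rabs (t n) ^ S m) by (apply pow_incr; lra).
  lra.
Qed.

Lemma Rabs_sub_le_add_nondecreasing (G : R -> R) (p q : R) :
  (forall p q, 0 <= p <= q -> 0 <= G p <= G q) -> 0 <= p -> 0 <= q ->
  Rabs (p - q) <= Rabs ((p + G p) - (q + G q)).
Proof.
  intros HG Hp Hq.
  destruct (Rle_lt_dec p q) as [Hpq|Hpq].
  - destruct (HG p q (conj Hp Hpq)).
    rewrite !Rabs_left1 by lra; lra.
  - destruct (HG q p (conj Hq (Rlt_le _ _ Hpq))).
    rewrite !Rabs_right by lra; lra.
Qed.

Lemma Rabs_Rmax_le_of_nonpos (a b : R) : b <= 0 -> Rabs (Rmax a b) <= Rabs a.
Proof.
  intros Hb; unfold Rmax; destruct (Rle_dec a b); [rewrite !Rabs_left1 by lra; lra | lra].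
Qed.

(* The energy [E n = Y (n+1) + G (Y n)] decreases and is bounded below, so it
   converges; the dissipation bound forces the increments to vanish, hence
   [Y n + G (Y n)] converges too, and [y + G y] is expanding on [0, +oo). *)
Lemma cv_of_energy_dissipation (Y : nat -> R) (G : R -> R) (m : nat) (c : R) :
  0 < c -> (forall n, 0 <= Y n) ->
  (forall p q, 0 <= p <= q -> 0 <= G p <= G q) ->
  (forall n, Rabs (Y (S n) - Y n) ^ S m
             <= c * ((Y (S n) + G (Y n)) - (Y (S (S n)) + G (Y (S n))))) ->
  exists l, Un_cv Y l.
Proof.
  intros Hc HY HG Hdiss.
  set (E := fun n => Y (S n) + G (Y n)).
  assert (HEdec : Un_decreasing E).
  { intro n; specialize (Hdiss n).
    assert (0 <= Rabs (Y (S n) - Y n) ^ S m) by (apply pow_le, Rabs_pos).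
    unfold E; nra. }
  assert (HElb : has_lb E).
  { exists 0; intros y [i ->]; unfold opp_seq, E.
    generalize (HY (S i)) (proj1 (HG _ _ (conj (HY i) (Rle_refl _)))); lra. }
  destruct (decreasing_cv E HEdec HElb) as [L HL].
  assert (Hincr : Un_cv (fun n => Y (S n) - Y n) 0).
  { apply Un_cv_0_of_pow_le with (b := fun n => E n - E (S n)) (m := m) (c := c);
      [exact Hc | exact Hdiss |].
    rewrite <- (Rminus_diag L); apply CV_minus; [exact HL | apply Un_cv_shift1, HL]. }
  assert (HF : Un_cv (fun n => Y n + G (Y n)) L).
  { rewrite <- (Rminus_0_r L).
    apply Un_cv_ext with (fun n => E n - (Y (S n) - Y n)).
    - intro n; unfold E; ring.
    - apply CV_minus; assumption. }
  assert (HFc := CV_Cauchy _ (exist _ L HF)).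
  destruct (R_complete Y) as [l Hl]; [|exists l; exact Hl].
  intros eps Heps; destruct (HFc eps Heps) as [N HN].
  exists N; intros n p Hn Hp; unfold Rdist.
  eapply Rle_lt_trans; [apply (Rabs_sub_le_add_nondecreasing G); auto | apply HN; auto].
Qed.

Lemma cv_of_negative_feedback (zeta : nat) (phi : R) (Y : nat -> R) :
  (zeta = 0 \/ zeta = 1)%nat -> phi <= -1 -> (forall n, 0 <= Y n) ->
  (forall n, Y (S (S n)) = Y (S n) + phi * Y (S n) ^ (1 + zeta) * (Y (S n) - Y n)) ->
  exists l, Un_cv Y l.
Proof.
  intros Hz Hphi HY HYrec.
  assert (Hc : 0 < 2 + INR zeta) by (generalize (pos_INR zeta); lra).
  set (G := fun y => - phi * y ^ (2 + zeta) / (2 + INR zeta)).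
  assert (HG : forall p q, 0 <= p <= q -> 0 <= G p <= G q).
  { intros p q Hpq; unfold G, Rdiv.
    assert (0 <= p ^ (2 + zeta)) by (apply pow_le; lra).
    assert (p ^ (2 + zeta) <= q ^ (2 + zeta)) by (apply pow_incr; lra).
    assert (0 < / (2 + INR zeta)) by (apply Rinv_0_lt_compat; lra).
    split.
    - apply Rmult_le_pos; [apply Rmult_le_pos|]; lra.
    - apply Rmult_le_compat_r; [|apply Rmult_le_compat_l]; lra. }
  assert (Hdiss : forall p q, 0 <= p -> 0 <= q ->
    Rabs (p - q) ^ (2 + zeta)
    <= (2 + INR zeta) * ((p + G q) - (p + phi * p ^ (1 + zeta) * (p - q) + G p))).
  { intros p q Hp Hq; unfold G.
    assert (Hpq : Rabs (p - q) <= 2 * p + q) by (apply Rabs_le; lra).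
    assert (0 <= Rabs (p - q)) by apply Rabs_pos.
    destruct Hz as [-> | ->]; simpl (2 + _)%nat; simpl (1 + _)%nat; simpl INR.
    - replace ((2 + 0) * ((p + - phi * q ^ 2 / (2 + 0))
                 - (p + phi * p ^ 1 * (p - q) + - phi * p ^ 2 / (2 + 0))))
        with (- phi * Rabs (p - q) ^ 2) by (rewrite pow2_abs; field).
      assert (0 <= Rabs (p - q) ^ 2) by apply pow2_ge_0; nra.
    - replace ((2 + 1) * ((p + - phi * q ^ 3 / (2 + 1))
                 - (p + phi * p ^ 2 * (p - q) + - phi * p ^ 3 / (2 + 1))))
        with (- phi * (Rabs (p - q) ^ 2 * (2 * p + q))) by (rewrite pow2_abs; field).
      assert (Rabs (p - q) ^ 3 <= Rabs (p - q) ^ 2 * (2 * p + q)) by (simpl; nra).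
      assert (0 <= Rabs (p - q) ^ 2 * (2 * p + q)) by (apply Rmult_le_pos; [apply pow2_ge_0|lra]).
      nra. }
  apply (cv_of_energy_dissipation Y G (S zeta) (2 + INR zeta) Hc HY HG).
  intro n; rewrite HYrec; apply Hdiss; apply HY.
Qed.

Section MarketImpactScenario.

Variables (T : R) (zeta : nat) (phi : R).
Hypothesis HT : 0 < T.

Local Notation u := (mis_u T zeta phi).
Local Notation s := (mis_s T zeta phi).

Lemma mis_pair_snd (x : R) (n : nat) : snd (mis_pair T zeta phi x n) = s n x.
Proof.
  induction n as [|n IH]; [reflexivity|].
  unfold mis_s, mis_u in *; simpl.
  rewrite <- IH; destruct (mis_pair T zeta phi x n); reflexivity.
Qed.

Lemma mis_u_0 (x : R) : u 0 x = Rmax x (- T).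
Proof. reflexivity. Qed.

Lemma mis_s_0 (x : R) : s 0 x = Rmax x (- T).
Proof. reflexivity. Qed.

Lemma mis_u_S (x : R) (n : nat) :
  u (S n) x = Rmax (phi * (1 + s n x / T) ^ (1 + zeta) * u n x) (- s n x - T).
Proof.
  rewrite <- mis_pair_snd; unfold mis_u; simpl.
  destruct (mis_pair T zeta phi x n); reflexivity.
Qed.

Lemma mis_s_S (x : R) (n : nat) : s (S n) x = s n x + u (S n) x.
Proof. reflexivity. Qed.

Lemma mis_s_ge (x : R) (n : nat) : - T <= s n x.
Proof.
  destruct n as [|n].
  - rewrite mis_s_0; apply Rmax_r.
  - rewrite mis_s_S, mis_u_S.
    generalize (Rmax_r (phi * (1 + s n x / T) ^ (1 + zeta) * u n x) (- s n x - T)); lra.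
Qed.

Lemma mis_u_S_cases (x : R) (n : nat) :
  u (S n) x = phi * (1 + s n x / T) ^ (1 + zeta) * u n x \/ s (S n) x = - T.
Proof.
  rewrite mis_s_S, mis_u_S; unfold Rmax.
  destruct (Rle_dec _ _); [right; ring | left; reflexivity].
Qed.

Lemma mis_s_stuck (x : R) (N : nat) : s N x = - T -> forall j, s (j + N) x = - T.
Proof.
  intros HN j; induction j as [|j IH]; [exact HN|].
  simpl; rewrite mis_s_S, mis_u_S, IH.
  replace (1 + - T / T) with 0 by (field; lra).
  rewrite pow_i by lia; rewrite Rmult_0_r, Rmult_0_l.
  replace (- - T - T) with 0 by ring; rewrite Rmax_left; lra.
Qed.

Lemma mis_u_ge_of_phi_ge_1 (x : R) :
  1 <= phi -> 0 < x -> forall n, x <= u n x /\ 0 <= s n x.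
Proof.
  intros Hphi Hx n; induction n as [|n [Hu Hs]].
  - rewrite mis_u_0, mis_s_0, Rmax_left by lra; lra.
  - assert (Hy : 1 <= (1 + s n x / T) ^ (1 + zeta)).
    { apply pow_R1_Rle.
      assert (0 <= s n x / T) by (unfold Rdiv; apply Rmult_le_pos; [|left; apply Rinv_0_lt_compat]; lra).
      lra. }
    assert (Hu' : x <= u (S n) x).
    { rewrite mis_u_S; eapply Rle_trans; [|apply Rmax_l].
      set (y := (1 + s n x / T) ^ (1 + zeta)) in *.
      assert (1 <= phi * y) by nra; nra. }
    rewrite mis_s_S; split; lra.
Qed.

Lemma mis_not_admissible : 1 <= phi -> ~ admissible u.
Proof.
  intros Hphi [R0 [HR0 Hadm]].
  destruct (Hadm (R0 / 2)) as [l Hl]; [lra|].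
  apply (not_infinite_sum_of_terms_ge (fun n => u n (R0 / 2)) (R0 / 2) l); [lra | | exact Hl].
  intro n; apply mis_u_ge_of_phi_ge_1; lra.
Qed.

Lemma mis_u_S_contract (x r : R) (n : nat) :
  0 <= r <= 1 -> Rabs (s n x) <= r * T ->
  Rabs (u (S n) x) <= Rabs phi * (1 + r) ^ (1 + zeta) * Rabs (u n x).
Proof.
  intros Hr Hs.
  set (y := 1 + s n x / T).
  assert (HyT : y * T = T + s n x) by (unfold y; field; lra).
  generalize (Rle_abs (s n x)) (Rle_abs (- s n x)); rewrite Rabs_Ropp; intros.
  assert (Hy : 0 <= y <= 1 + r) by (split; nra).
  rewrite mis_u_S; fold y.
  eapply Rle_trans; [apply Rabs_Rmax_le_of_nonpos; nra|].
  rewrite !Rabs_mult, (Rabs_pos_eq (y ^ _)) by (apply pow_le; lra).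
  apply Rmult_le_compat_r; [apply Rabs_pos|].
  apply Rmult_le_compat_l; [apply Rabs_pos|].
  apply pow_incr; lra.
Qed.

Lemma mis_u_geometric_bound (x q r : R) :
  0 <= r <= 1 -> 0 <= q < 1 -> Rabs phi * (1 + r) ^ (1 + zeta) <= q ->
  Rabs x <= r * T * (1 - q) -> forall n, Rabs (u n x) <= Rabs x * q ^ n.
Proof.
  intros Hr Hq Hphi Hx.
  assert (HxT : Rabs x * / (1 - q) <= r * T).
  { apply (Rmult_le_reg_r (1 - q)); [lra|].
    rewrite Rmult_assoc, Rinv_l by lra; lra. }
  enough (Inv : forall n, Rabs (u n x) <= Rabs x * q ^ n /\
                          Rabs (s n x) <= Rabs x * sum_f_R0 (fun k => q ^ k) n)
    by (intro n; apply Inv).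
  induction n as [|n [Hu Hs]].
  - assert (- T <= x).
    { generalize (Rle_abs (- x)); rewrite Rabs_Ropp; intro.
      assert (r * (1 - q) <= 1) by nra.
      assert (r * T * (1 - q) <= T) by nra; lra. }
    rewrite mis_u_0, mis_s_0, Rmax_left by lra; simpl; lra.
  - assert (Hsr : Rabs (s n x) <= r * T).
    { apply Rle_trans with (Rabs x * / (1 - q)); [|exact HxT].
      eapply Rle_trans; [exact Hs|].
      apply Rmult_le_compat_l; [apply Rabs_pos | apply sum_pow_le_inv, Hq]. }
    assert (Hu' : Rabs (u (S n) x) <= Rabs x * q ^ S n).
    { eapply Rle_trans; [apply (mis_u_S_contract x r n Hr Hsr)|].
      apply Rle_trans with (q * Rabs (u n x)).
      - apply Rmult_le_compat_r; [apply Rabs_pos | exact Hphi].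
      - simpl; nra. }
    split; [exact Hu'|].
    rewrite mis_s_S, tech5, Rmult_plus_distr_l.
    eapply Rle_trans; [apply Rabs_triang | lra].
Qed.

Lemma mis_admissible_of_Rabs_lt_1 :
  (zeta = 0 \/ zeta = 1)%nat -> -1 < phi < 1 -> admissible u.
Proof.
  intros Hz Hphi.
  set (a := Rabs phi).
  assert (Ha : 0 <= a < 1) by (split; [apply Rabs_pos | apply Rabs_def1; lra]).
  set (q := (1 + a) / 2); set (r := (1 - a) / 6).
  assert (Hq : 0 <= q < 1) by (unfold q; lra).
  assert (Hr : 0 <= r <= 1) by (unfold r; lra).
  assert (Hcontract : a * (1 + r) ^ (1 + zeta) <= q).
  { unfold q, r; destruct Hz as [-> | ->]; simpl; nra. }
  exists (r * T * (1 - q)); split.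
  { apply Rmult_lt_0_compat; [apply Rmult_lt_0_compat|]; unfold r, q; lra. }
  intros x Hx.
  apply (infinite_sum_of_geometric_bound _ (Rabs x) q Hq).
  apply (mis_u_geometric_bound x q r Hr Hq Hcontract).
  apply Rabs_le; lra.
Qed.

Lemma mis_s_cv_of_phi_le_m1 (x : R) :
  (zeta = 0 \/ zeta = 1)%nat -> phi <= -1 -> exists l, Un_cv (fun n => s n x) l.
Proof.
  intros Hz Hphi.
  destruct (classic (exists N, s N x = - T)) as [[N HN] | Hfree].
  - exists (- T); intros eps Heps; exists N; intros n Hn.
    replace n with ((n - N) + N)%nat by lia.
    rewrite (mis_s_stuck x N HN), Rdist_eq; lra.
  - set (Y := fun n => 1 + s n x / T).
    assert (HsY : forall n, s n x = T * (Y n - 1)) by (intro; unfold Y; field; lra).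
    assert (HY : forall n, 0 <= Y n) by (intro n; generalize (mis_s_ge x n) (HsY n); nra).
    assert (HYrec : forall n,
      Y (S (S n)) = Y (S n) + phi * Y (S n) ^ (1 + zeta) * (Y (S n) - Y n)).
    { intro n.
      destruct (mis_u_S_cases x (S n)) as [Hu | Hstop]; [|exfalso; eauto].
      assert (Hu1 : u (S n) x = s (S n) x - s n x) by (rewrite mis_s_S; ring).
      unfold Y; rewrite mis_s_S, Hu, Hu1; field; lra. }
    destruct (cv_of_negative_feedback zeta phi Y Hz Hphi HY HYrec) as [l Hl].
    exists (T * (l - 1)).
    apply Un_cv_ext with (fun n => T * (Y n - 1)); [intro n; symmetry; apply HsY|].
    apply CV_mult; [apply Un_cv_const | apply CV_minus; [exact Hl | apply Un_cv_const]].
Qed.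

Lemma mis_admissible_of_phi_le_m1 :
  (zeta = 0 \/ zeta = 1)%nat -> phi <= -1 -> admissible u.
Proof.
  intros Hz Hphi; exists 1; split; [lra|].
  intros x _; exact (mis_s_cv_of_phi_le_m1 x Hz Hphi).
Qed.

End MarketImpactScenario.

Theorem theorem4p1 (S : R) (zeta : nat) (phi : R) :
  S > 0 -> (zeta = 0%nat \/ zeta = 1%nat) ->
  (phi >= 1 -> ~ admissible (mis_u S zeta phi)) /\
  (-1 < phi < 1 -> admissible (mis_u S zeta phi)) /\
  (phi <= -1 -> partial_sums_bounded S zeta phi -> admissible (mis_u S zeta phi)) /\
  ((phi <= -1 -> partial_sums_bounded S zeta phi) ->
     (admissible (mis_u S zeta phi) <-> phi < 1)).
Proof.
  intros HS Hz.
  assert (Ha : phi >= 1 -> ~ admissible (mis_u S zeta phi))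
    by (intro; apply mis_not_admissible; lra).
  assert (Hb : -1 < phi < 1 -> admissible (mis_u S zeta phi))
    by (apply mis_admissible_of_Rabs_lt_1; assumption).
  assert (Hc : phi <= -1 -> admissible (mis_u S zeta phi))
    by (apply mis_admissible_of_phi_le_m1; assumption).
  split; [exact Ha|]. split; [exact Hb|].
  split; [intros Hphi _; exact (Hc Hphi)|].
  intros _; split.
  - intro Hadm; apply Rnot_le_lt; intro Hphi; exact (Ha (Rle_ge _ _ Hphi) Hadm).
  - intro Hphi; destruct (Rle_lt_dec phi (-1)); [apply Hc | apply Hb; split]; assumption.
Qed.
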